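(* Let $\Theta$ be a modular action theory and $\Phi$ a law. Then $\Theta'\cup\{\Phi\}\models_{PDL}\Theta$ for all $\Theta'\in\Theta\ominus\Phi$.
   Context: Fix a finite set $\mathrm{Act}$ of atomic actions and a finite set $\mathrm{Prop}$ of atoms; $\mathrm{Lit}$ is the set of literals. Boolean formulas are classical propositional formulas over $\mathrm{Prop}$, $\models_{CPL}$ classical consequence. Modal formulas are built from Boolean ones with the Boolean connectives and $[a]$ ($a\in\mathrm{Act}$); $\langle a\rangle\Phi:=\neg[a]\neg\Phi$. A PDL-model is $\langle W,R\rangle$, $W$ a set of valuations (maximal consistent sets of literals), $R_a\subseteq W\times W$; truth is standard; a model satisfies a formula iff it holds at all worlds; $\Sigma\models_{PDL}\Phi$ iff every model of $\Sigma$ is a model of $\Phi$, and $\Sigma\models_{PDL}\Theta$ means $\Sigma\models_{PDL}\Phi$ for each $\Phi\in\Theta$. A static law is a Boolean formula; an effect law for $a$ is $\varphi\to[a]\psi$; an executability law for $a$ is $\varphi\to\langle a\rangle\top$; a law is any of these. An action theory is a finite set $\Theta=S\cup E\cup X$ of static, effect, executability laws; $E_a,X_a$ those about $a$. $\Theta$ is modular iff for every Boolean $\varphi$, $\Theta\models_{PDL}\varphi$ implies $S\models_{CPL}\varphi$. Syntactic contraction $\Theta\ominus\Phi$ (a set of theories). $IP(\chi)$: prime implicants of $\chi$; $\bigwedge S$: conjunction of $S$; $\mathrm{atm}(\tau)$: atoms of the term $\tau$; for $A\subseteq\mathrm{Prop}\setminus\mathrm{atm}(\tau)$, $\varphi_A:=\bigwedge_{p\in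 A}p\wedge\bigwedge_{p\in\mathrm{Prop}\setminus(\mathrm{atm}(\tau)\cup A)}\neg p$. (1) $\Phi=\varphi\to\langle a\rangle\top$: if $\Theta\not\models_{PDL}\Phi$, result $\{\Theta\}$; else the theories $(\Theta\setminus X_a)\cup\{(\varphi_i\wedge\neg(\tau\wedge\varphi_A))\to\langle a\rangle\top:\varphi_i\to\langle a\rangle\top\in X_a\}$ for $\tau\in IP(\bigwedge S\wedge\varphi)$, $A\subseteq\mathrm{Prop}\setminus\mathrm{atm}(\tau)$ with $S\not\models_{CPL}\neg(\tau\wedge\varphi_A)$. (2) $\Phi=\varphi\to[a]\psi$: if $\Theta\not\models_{PDL}\Phi$, result $\{\Theta\}$; else let $E^-_a$ be the union of all minimal $E'\subseteq E_a$ with $S\cup E'\models_{PDL}\Phi$; for $\tau,A$ as in (1) and $\tau'\in IP(\bigwedge S\wedge\neg\psi)$ the result contains $(\Theta\setminus E^-_a)\cup\{(\varphi_i\wedge\neg(\tau\wedge\varphi_A))\to[a]\psi_i\}\cup\{(\varphi_i\wedge\tau\wedge\varphi_A)\to[a](\psi_i\vee\tau')\}$ (over $\varphi_i\to[a]\psi_i\in E^-_a$) $\cup\{(\tau\wedge\varphi_A\wedge\ell)\to[a](\psi\vee\ell):\ell\in L$ for some $L\subseteq\mathrm{Lit}$ with $S\models_{CPL}(\tau\wedge\varphi_A)\to\bigwedge L$, $S\not\models_{CPL}\neg(\tau'\wedge\bigwedge L)$, and ($\Theta\not\models_{PDL}(\tau\wedge\varphi_A\wedge\ell)\to[a]\neg\ell$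 or $\ell\in\tau'$)$\}$. (3) $\Phi=\varphi$ Boolean: if $S\not\models_{CPL}\varphi$, result $\{\Theta\}$; else for each $S^-\in S\ominus\varphi$ (a given classical contraction operator, assumed Katsuno–Mendelzon-like, $S\models_{CPL}\bigwedge S^-$, sound, complete and minimal w.r.t. its semantics) the theory obtained from $(\Theta\setminus S)\cup S^-$ by replacing each $X_a$ with $\{(\varphi_i\wedge\varphi)\to\langle a\rangle\top:\varphi_i\to\langle a\rangle\top\in X_a\}$ and adding $\neg\varphi\to[a]\bot$ for each $a$. *)

From mathcomp Require Import all_boot.
From Stdlib Require List.

Set Implicit Arguments.
Unset Strict Implicit.
Unset Printing Implicit Defensive.

Section ActionTheories.

Variables (Act Prp : finType).

Inductive bform : Type :=
| BVar of Prp
| BTop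
| BBot
| BNot of bform
| BAnd of bform & bform
| BOr of bform & bform
| BImp of bform & bform.

(* valuations = maximal consistent sets of literals *)
Definition valuation := {ffun Prp -> bool}.

Fixpoint bsat (v : valuation) (f : bform) : bool :=
  match f with
  | BVar p => v p
  | BTop => true
  | BBot => false
  | BNot g => ~~ bsat v g
  | BAnd g h => bsat v g && bsat v h
  | BOr g h => bsat v g || bsat v h
  | BImp g h => bsat v g ==> bsat v h
  end.

Definition bigand (S : seq bform) : bform := foldr BAnd BTop S.

Definition bent (f g : bform) : Prop := forall v, bsat v f -> bsat v g.
Definition cpl_ent (S : seq bform) (f : bform) : Prop := bent (bigand S) f.

Definition lit := (Prp * bool)%type.
Definition lit_form (l : lit) : bform := if l.2 then BVar l.1 else BNot (BVar l.1).

Definition term_form (t : {set lit}) : bform :=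
  foldr (fun l acc => BAnd (lit_form l) acc) BTop (enum t).
Definition consistent_term (t : {set lit}) : Prop :=
  forall p : Prp, ~ ((p, true) \in t /\ (p, false) \in t).
Definition atm (t : {set lit}) : {set Prp} := [set l.1 | l in t].

Definition prime_implicant (t : {set lit}) (chi : bform) : Prop :=
  [/\ consistent_term t,
      bent (term_form t) chi &
      forall t' : {set lit}, t' \proper t -> ~ bent (term_form t') chi].

(* phi_A (as a set of literals; for A disjoint from atm tau) *)
Definition phiA_set (t : {set lit}) (A : {set Prp}) : {set lit} :=
  [set l : lit | (l.1 \notin atm t) && (l.2 == (l.1 \in A))].
Definition phiA (t : {set lit}) (A : {set Prp}) : bform := term_form (phiA_set t A).
Definition tauA (t : {set lit}) (A : {set Prp}) : bform := BAnd (term_form t) (phiA t A).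

Inductive mform : Type :=
| MB of bform
| MNot of mform
| MAnd of mform & mform
| MOr of mform & mform
| MImp of mform & mform
| MBox of Act & mform.

Definition MDia (a : Act) (m : mform) : mform := MNot (MBox a (MNot m)).

(* a PDL-model is <W, R>: W a set of valuations, R_a relations (only the
   restriction to W matters) *)
Fixpoint mholds (W : {set valuation}) (R : Act -> rel valuation)
    (w : valuation) (m : mform) : Prop :=
  match m with
  | MB f => bsat w f
  | MNot m1 => ~ mholds W R w m1
  | MAnd m1 m2 => mholds W R w m1 /\ mholds W R w m2
  | MOr m1 m2 => mholds W R w m1 \/ mholds W R w m2
  | MImp m1 m2 => mholds W R w m1 -> mholds W R w m2
  | MBox a m1 => forall w', w' \in W -> R a w w' -> mholds W R w' m1
  end.

Definition msat (W : {set valuation}) (R : Act -> rel valuation) (m : mform) : Prop :=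
  forall w, w \in W -> mholds W R w m.

Inductive law : Type :=
| Static of bform
| Effect of Act & bform & bform
| Exec of Act & bform.

Definition law_form (L : law) : mform :=
  match L with
  | Static f => MB f
  | Effect a f g => MImp (MB f) (MBox a (MB g))
  | Exec a f => MImp (MB f) (MDia a (MB BTop))
  end.

Definition theory := seq law.

Definition is_static (L : law) : bool := if L is Static _ then true else false.
Definition is_effect_for (a : Act) (L : law) : bool :=
  if L is Effect b _ _ then b == a else false.
Definition is_exec_for (a : Act) (L : law) : bool :=
  if L is Exec b _ then b == a else false.

Definition statics (T : theory) : seq bform :=
  pmap (fun L => if L is Static f then Some f else None) T.

Definition pdl_ent (Sigma : law -> Prop) (L : law) : Prop :=
  forall W R, (forall L', Sigma L' -> msat W R (law_form L')) ->
    msat W R (law_form L).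

Definition mem_th (T : theory) : law -> Prop := fun L => List.In L T.

Definition pdl_ent_th (Sigma : law -> Prop) (T : theory) : Prop :=
  forall L, List.In L T -> pdl_ent Sigma L.

Definition modular (T : theory) : Prop :=
  forall f : bform, pdl_ent (mem_th T) (Static f) -> cpl_ent (statics T) f.

(* [scontr S phi Sm] means Sm \in S (-) phi.  Katsuno-Mendelzon-like:
   S |= /\ Sm, and the models of Sm are those of S plus some models of ~phi. *)
Definition km_like (scontr : seq bform -> bform -> seq bform -> Prop) : Prop :=
  forall S phi Sm, scontr S phi Sm ->
    cpl_ent S (bigand Sm) /\
    (forall v, bsat v (bigand Sm) -> bsat v (bigand S) \/ ~~ bsat v phi).

(* [contraction scontr T Phi T'] means T' \in T (-) Phi (theories compared as
   sets of laws). *)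

Definition static_part (T : theory) : law -> Prop :=
  fun L => List.In L T /\ is_static L.

Definition minimal_effect_subset (T : theory) (a : Act) (Phi : law)
    (E' : law -> Prop) : Prop :=
  [/\ (forall L, E' L -> List.In L T /\ is_effect_for a L),
      pdl_ent (fun L => static_part T L \/ E' L) Phi &
      forall E'' : law -> Prop, (forall L, E'' L -> E' L) ->
        pdl_ent (fun L => static_part T L \/ E'' L) Phi ->
        forall L, E' L -> E'' L].

Definition Eminus (T : theory) (a : Act) (Phi : law) : law -> Prop :=
  fun L => exists E', minimal_effect_subset T a Phi E' /\ E' L.

Definition same_set (T' : theory) (P : law -> Prop) : Prop :=
  forall L, List.In L T' <-> P L.

Definition contraction (scontr : seq bform -> bform -> seq bform -> Prop)
    (T : theory) (Phi : law) (T' : theory) : Prop :=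
  let S := statics T in
  match Phi with
  | Exec a phi =>
      (~ pdl_ent (mem_th T) Phi /\ same_set T' (mem_th T)) \/
      (pdl_ent (mem_th T) Phi /\
      exists (t : {set lit}) (A : {set Prp}),
        [/\ prime_implicant t (BAnd (bigand S) phi),
            [disjoint A & atm t],
            ~ cpl_ent S (BNot (tauA t A)) &
            same_set T' (fun L =>
              (List.In L T /\ ~~ is_exec_for a L) \/
              (exists phi_i, List.In (Exec a phi_i) T /\
                 L = Exec a (BAnd phi_i (BNot (tauA t A)))))])
  | Effect a phi psi =>
      (~ pdl_ent (mem_th T) Phi /\ same_set T' (mem_th T)) \/
      (pdl_ent (mem_th T) Phi /\
      exists (t : {set lit}) (A : {set Prp}) (t' : {set lit}),
        [/\ prime_implicant t (BAnd (bigand S) phi),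
            [disjoint A & atm t],
            ~ cpl_ent S (BNot (tauA t A)),
            prime_implicant t' (BAnd (bigand S) (BNot psi)) &
            same_set T' (fun L =>
              (List.In L T /\ ~ Eminus T a Phi L) \/
              (exists phi_i psi_i, Eminus T a Phi (Effect a phi_i psi_i) /\
                 L = Effect a (BAnd phi_i (BNot (tauA t A))) psi_i) \/
              (exists phi_i psi_i, Eminus T a Phi (Effect a phi_i psi_i) /\
                 L = Effect a (BAnd phi_i (tauA t A))
                              (BOr psi_i (term_form t'))) \/
              (exists (l : lit) (Ls : {set lit}),
                 [/\ l \in Ls,
                     cpl_ent S (BImp (tauA t A) (term_form Ls)),
                     ~ cpl_ent S (BNot (BAnd (term_form t') (term_form Ls))),
                     (~ pdl_ent (mem_th T)
                          (Effect a (BAnd (tauA t A) (lit_form l))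
                                    (BNot (lit_form l))) \/ l \in t') &
                     L = Effect a (BAnd (tauA t A) (lit_form l))
                                  (BOr psi (lit_form l))]))])
  | Static phi =>
      (~ cpl_ent S phi /\ same_set T' (mem_th T)) \/
      (cpl_ent S phi /\
      exists Sm, scontr S phi Sm /\
        same_set T' (fun L =>
          (List.In L T /\ (exists b f g, L = Effect b f g)) \/
          (exists g, List.In g Sm /\ L = Static g) \/
          (exists b phi_i, List.In (Exec b phi_i) T /\
             L = Exec b (BAnd phi_i phi)) \/
          (exists b : Act, L = Effect b (BNot phi) BBot)))
  end.

End ActionTheories.

(* For a Boolean Phi, the Katsuno-Mendelzon property
   says every model of S- satisfies S or not Phi, and Phi holds everywhere.  For
   an effect or executability law, tau /\ phi_A entails phi because tau is an
   implicant of /\S /\ phi, so at tau /\ phi_A-worlds Phi itself supplies the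
   weakened law; elsewhere the weakened laws of Theta' coincide with the old
   ones.  For effect laws the extra disjunct tau' is harmless because it
   contradicts psi. *)
From mathcomp Require Import all_boot.
From Stdlib Require List Classical_Prop.

Set Implicit Arguments.
Unset Strict Implicit.
Unset Printing Implicit Defensive.

Section Soundness.

Variables (Act Prp : finType).

Lemma bsat_bigand_In (v : valuation Prp) (S : seq (bform Prp)) :
  (forall g, List.In g S -> bsat v g) -> bsat v (bigand S).
Proof.
elim: S => [//|g S IH] HS /=.
by rewrite HS /=; [apply: IH => g' Hg'; apply: HS; right | left].
Qed.

Lemma bsat_statics (T : theory Act Prp) (g : bform Prp) (v : valuation Prp) :
  List.In (Static Act g) T -> bsat v (bigand (statics T)) -> bsat v g.
Proof.
elim: T => [//|L T IH] /= [-> /andP [] //|/IH HT].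
by case: L => [f|b f h|b f] //= /andP [_].
Qed.

Lemma tauA_implicant_conjr (t : {set lit Prp}) (A : {set Prp}) (S phi : bform Prp)
    (v : valuation Prp) :
  prime_implicant t (BAnd S phi) -> bsat v (tauA t A) -> bsat v phi.
Proof. by case=> _ Ht _ /andP [/Ht /andP []]. Qed.

Lemma implicant_conjr_neg (t : {set lit Prp}) (S psi : bform Prp)
    (v : valuation Prp) :
  prime_implicant t (BAnd S (BNot psi)) -> bsat v psi -> ~~ bsat v (term_form t).
Proof. by case=> _ Ht _ Hpsi; apply/negP => /Ht /andP [_ /negP]. Qed.

Variables (W : {set valuation Prp}) (R : Act -> rel (valuation Prp)).

Notation msat := (msat W R).

Lemma same_set_msat (T' : theory Act Prp) (P : law Act Prp -> Prop) :
  same_set T' P -> (forall L, List.In L T' -> msat (law_form L)) ->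
  forall L, P L -> msat (law_form L).
Proof. by move=> Hs HT' L /Hs /HT'. Qed.

Lemma msat_static_of_km (scontr : seq (bform Prp) -> bform Prp -> seq (bform Prp) -> Prop)
    (T : theory Act Prp) (phi g : bform Prp) (Sm : seq (bform Prp)) :
  km_like scontr -> scontr (statics T) phi Sm -> List.In (Static Act g) T ->
  (forall g', List.In g' Sm -> msat (MB Act g')) -> msat (MB Act phi) -> msat (MB Act g).
Proof.
move=> Hkm /Hkm [_ HSm] Hg HSm' Hphi w Hw /=.
have /HSm [|] : bsat w (bigand Sm) by apply: bsat_bigand_In => g' /HSm'; apply.
  exact: bsat_statics.
by rewrite (Hphi w Hw).
Qed.

Lemma msat_exec_strengthened (a : Act) (f phi : bform Prp) :
  msat (law_form (Exec a (BAnd f phi))) -> msat (MB Act phi) ->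
  msat (law_form (Exec a f)).
Proof. by move=> Hex Hphi w Hw Hf; apply: Hex => //=; rewrite Hf (Hphi w Hw). Qed.

Lemma msat_exec_split (a : Act) (f c : bform Prp) :
  msat (law_form (Exec a (BAnd f (BNot c)))) ->
  (forall w, w \in W -> bsat w c -> mholds W R w (MDia a (MB Act (BTop Prp)))) ->
  msat (law_form (Exec a f)).
Proof.
move=> Hex Hc w Hw Hf; case Hcw: (bsat w c); first exact: Hc.
by apply: Hex => //=; rewrite Hf Hcw.
Qed.

Lemma msat_effect_split (a : Act) (f g c h : bform Prp) :
  msat (law_form (Effect a (BAnd f (BNot c)) g)) ->
  msat (law_form (Effect a (BAnd f c) (BOr g h))) ->
  (forall w w', w \in W -> w' \in W -> R a w w' -> bsat w c -> ~~ bsat w' h) ->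
  msat (law_form (Effect a f g)).
Proof.
move=> Hout Hin Hh w Hw /= Hf w' Hw' Hr; case Hcw: (bsat w c).
  have Hfc : bsat w (BAnd f c) by rewrite /= Hf Hcw.
  have /= := Hin w Hw Hfc w' Hw' Hr.
  by case/orP => // Hhw'; case/negP: (Hh w w' Hw Hw' Hr Hcw).
by apply: (Hout w Hw) => //=; rewrite Hf Hcw.
Qed.

End Soundness.

Theorem theorem8 (Act Prp : finType)
  (scontr : seq (bform Prp) -> bform Prp -> seq (bform Prp) -> Prop)
  (Hscontr : km_like scontr)
  (Theta : theory Act Prp) (Phi : law Act Prp) :
  modular Theta ->
  forall Theta' : theory Act Prp, contraction scontr Theta Phi Theta' ->
    pdl_ent_th (fun L => List.In L Theta' \/ L = Phi) Theta.
Proof.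
move=> _ T' HC L HL W R HM.
have HPhi := HM Phi (or_intror erefl).
have HT' L' (HL' : List.In L' T') := HM L' (or_introl HL').
case: Phi HC HPhi {HM} => [phi|a phi psi|a phi] /= HC HPhi;
  (case: HC => [[_ /same_set_msat HP]|[_ rest]]; first exact: HP).
- case: rest => Sm [Hsm /same_set_msat /(_ HT') HP].
  case: L HL => [g|b f g|b f] HL.
  + apply: (msat_static_of_km Hscontr Hsm HL) => // g' Hg'.
    by apply: (HP (Static Act g')); right; left; exists g'.
  + by apply: HP; left; split=> //; exists b, f, g.
  + apply: (msat_exec_strengthened (phi := phi)) => //.
    by apply: HP; do 2 right; left; exists b, f.
- case: rest => t [A [t' [Ht _ _ Ht' /same_set_msat /(_ HT') HP]]].
  have [HE|HE] := Classical_Prop.classic (Eminus Theta a (Effect a phi psi) L);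
    last by apply: HP; left.
  have [_] : List.In L Theta /\ is_effect_for a L.
    by case: (HE) => E' [[/(_ L) HE' _ _] /HE'].
  case: L HL HE => [//|b f g|//] _ HE /= /eqP Hba; subst b.
  apply: (msat_effect_split (c := tauA t A) (h := term_form t')).
  + by apply: HP; right; left; exists f, g.
  + by apply: HP; do 2 right; left; exists f, g.
  move=> w w' Hw Hw' Hr Hc; apply: (implicant_conjr_neg Ht').
  by apply: HPhi w Hw (tauA_implicant_conjr Ht Hc) w' Hw' Hr.
- case: rest => t [A [Ht _ _ /same_set_msat /(_ HT') HP]].
  case Hx: (is_exec_for a L); last by apply: HP; left; rewrite Hx.
  case: L HL Hx => [//|//|b f] HL /eqP Hba; subst b.
  apply: (msat_exec_split (c := tauA t A)).
    by apply: HP; right; exists f.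
  by move=> w Hw /(tauA_implicant_conjr Ht); apply: HPhi.
Qed.
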